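(* Let $w$ be a weak convergence for a metric space $(X,d)$. If $\{x_n\}_{n\in\mathbb{N}}$ and $x$ in $X$ satisfy $x_n\to x$ in $d$, then every subsequence of $\{x_n\}_{n\in\mathbb{N}}$ admits a further subsequence converging in $w$ to $x$.
   Context: A convergence $c$ on a set $X$ is a rule assigning at most one point of $X$ as the ''limit'' of each sequence in $X$, such that whenever a sequence has limit $x$, every subsequence also has limit $x$; we write $x_n\to x$ in $c$. A convergence $w$ on $X$ is a weak convergence for $(X,d)$ if: (W1) whenever $\{x_n\}$ and $y$ in $X$ satisfy $\sup_n d(x_n,y)<\infty$, there are a subsequence $\{n_k\}$ and $x\in X$ with $x_{n_k}\to x$ in $w$; (W2) whenever $x_n\to x$ in $w$, $d(x,y)\le\liminf_n d(x_n,y)$ for all $y\in X$; (W3) whenever $x_n\to x$ in $w$ and $d(x_n,y)\to d(x,y)$ for some $y\in X$, then $d(x_n,x)\to0$. *)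

From Stdlib Require Import Reals Lra.
Open Scope R_scope.

Record is_metric {X : Type} (d : X -> X -> R) : Prop := {
  metric_nonneg : forall x y, 0 <= d x y;
  metric_eq0 : forall x y, d x y = 0 <-> x = y;
  metric_sym : forall x y, d x y = d y x;
  metric_triangle : forall x y z, d x z <= d x y + d y z
}.

Definition strictly_increasing (phi : nat -> nat) : Prop :=
  forall n m, (n < m)%nat -> (phi n < phi m)%nat.

Record is_convergence {X : Type} (c : (nat -> X) -> X -> Prop) : Prop := {
  conv_unique : forall u x y, c u x -> c u y -> x = y;
  conv_subseq : forall u x phi, strictly_increasing phi -> c u x -> c (fun k => u (phi k)) x
}.

Definition d_converges {X : Type} (d : X -> X -> R) (u : nat -> X) (x : X) : Prop :=
  Un_cv (fun n => d (u n) x) 0.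

Record is_weak_convergence {X : Type} (d : X -> X -> R) (w : (nat -> X) -> X -> Prop) : Prop := {
  wc_convergence : is_convergence w;
  wc_W1 : forall (u : nat -> X) (y : X),
      (exists M, forall n, d (u n) y <= M) ->
      exists phi x, strictly_increasing phi /\ w (fun k => u (phi k)) x;
  wc_W2 : forall u x, w u x -> forall y eps, 0 < eps ->
      exists N, forall n, (n >= N)%nat -> d x y - eps < d (u n) y;
  wc_W3 : forall u x y, w u x -> Un_cv (fun n => d (u n) y) (d x y) ->
      d_converges d u x
}.

(* Along the subsequence u ∘ phi the distances d(u_n, x) stay bounded, so (W1)
   yields a further subsequence with some weak limit z.  By (W2) with y = x,
   d(z, x) <= liminf d(u_n, x) = 0, hence z = x. *)

From Stdlib Require Import Reals Lra Lia.
Open Scope R_scope.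

Lemma strictly_increasing_ge (phi : nat -> nat) :
  strictly_increasing phi -> forall n, (n <= phi n)%nat.
Proof.
  intros Hphi n; induction n as [|n IH]; [lia|].
  specialize (Hphi n (S n) (Nat.lt_succ_diag_r n)); lia.
Qed.

Lemma Un_cv_subseq (s : nat -> R) (l : R) (phi : nat -> nat) :
  strictly_increasing phi -> Un_cv s l -> Un_cv (fun k => s (phi k)) l.
Proof.
  intros Hphi Hs eps Heps.
  destruct (Hs eps Heps) as [N HN].
  exists N; intros n Hn.
  apply HN.
  pose proof (strictly_increasing_ge phi Hphi n); lia.
Qed.

Lemma Un_cv_bounded (s : nat -> R) (l : R) :
  Un_cv s l -> exists M, forall n, s n <= M.
Proof.
  intros Hs.
  destruct (cauchy_bound s (CV_Cauchy s (exist _ l Hs))) as [M HM].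
  exists M; intro n.
  apply HM; exists n; reflexivity.
Qed.

Lemma d_converges_subseq {X : Type} (d : X -> X -> R) (u : nat -> X) (x : X)
  (phi : nat -> nat) :
  strictly_increasing phi -> d_converges d u x ->
  d_converges d (fun k => u (phi k)) x.
Proof. apply (Un_cv_subseq (fun n => d (u n) x)). Qed.

Lemma weak_limit_eq_metric_limit {X : Type} (d : X -> X -> R)
  (w : (nat -> X) -> X -> Prop) (v : nat -> X) (z x : X) :
  is_metric d -> is_weak_convergence d w ->
  w v z -> d_converges d v x -> z = x.
Proof.
  intros hd hw Hz Hx.
  apply (metric_eq0 d hd).
  pose proof (metric_nonneg d hd z x) as Hnonneg.
  destruct (Rle_lt_dec (d z x) 0) as [Hle|Hpos]; [lra|exfalso].
  set (eps := d z x / 2).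
  assert (Heps : 0 < eps) by (unfold eps; lra).
  destruct (wc_W2 d w hw v z Hz x eps Heps) as [N1 HN1].
  destruct (Hx eps Heps) as [N2 HN2].
  specialize (HN1 (max N1 N2) (Nat.le_max_l N1 N2)).
  specialize (HN2 (max N1 N2) (Nat.le_max_r N1 N2)).
  unfold R_dist in HN2; rewrite Rminus_0_r in HN2.
  pose proof (Rle_abs (d (v (max N1 N2)) x)).
  unfold eps in *; lra.
Qed.

Theorem lemma2p2 (X : Type) (d : X -> X -> R) (w : (nat -> X) -> X -> Prop)
  (hd : is_metric d) (hw : is_weak_convergence d w)
  (u : nat -> X) (x : X) (hux : d_converges d u x) :
  forall phi : nat -> nat, strictly_increasing phi ->
  exists psi : nat -> nat, strictly_increasing psi /\
    w (fun k => u (phi (psi k))) x.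
Proof.
  intros phi Hphi.
  pose proof (d_converges_subseq d u x phi Hphi hux) as Hsub.
  destruct (wc_W1 d w hw (fun n => u (phi n)) x (Un_cv_bounded _ 0 Hsub))
    as (psi & z & Hpsi & Hz).
  exists psi; split; [exact Hpsi|].
  replace x with z; [exact Hz|].
  apply (weak_limit_eq_metric_limit d w _ z x hd hw Hz).
  exact (d_converges_subseq d _ x psi Hpsi Hsub).
Qed.
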